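(* Let $p,N\in\mathbb{N}$, $x_0<\cdots<x_N$, data $y_{n,2k}\in\mathbb{R}$ ($n=0,\dots,N$, $k=0,\dots,p$), and for $n=1,\dots,N$ and $\alpha_n\in\mathbb{R}$ let $$q_n(\alpha_n,x)=\sum_{l=0}^p\Big[\big(a_n^{2l}y_{n-1,2l}-\alpha_n y_{0,2l}\big)\Lambda_l\Big(\tfrac{x_N-x}{x_N-x_0}\Big)+\big(a_n^{2l}y_{n,2l}-\alpha_n y_{N,2l}\big)\Lambda_l\Big(\tfrac{x-x_0}{x_N-x_0}\Big)\Big](x_N-x_0)^{2l}.$$ Then for every $k=0,1,\dots,p$ and every $x\in[x_0,x_N]$, $$\left|\frac{\partial^{2k+1}}{\partial\alpha_n\,\partial x^{2k}}q_n(\alpha_n,x)\right|\le\frac{2\rho\pi}{3}\sum_{l=0}^{p-k}\Big(\frac{x_N-x_0}{\pi}\Big)^{2l}.$$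
   Context: Lidstone polynomials $\Lambda_l$ are defined by $\Lambda_0(x)=x$, $\Lambda_l''=\Lambda_{l-1}$, $\Lambda_l(0)=\Lambda_l(1)=0$ for $l\ge1$. $a_n=\frac{x_n-x_{n-1}}{x_N-x_0}$. $\rho=\max_{0\le k\le p}\max\{|y_{0,2k}|,|y_{N,2k}|\}$. *)

From Stdlib Require Import Reals Lra Lia.
Open Scope R_scope.

(* Lidstone polynomials, characterized by their defining properties:
   Lam 0 t = t, and for l >= 1: Lam l is twice differentiable with
   (Lam l)'' = Lam (l-1), Lam l 0 = Lam l 1 = 0.  These determine Lam uniquely. *)
Definition Lidstone (Lam : nat -> R -> R) : Prop :=
  (forall t, Lam 0%nat t = t) /\
  forall l : nat, (1 <= l)%nat ->
    Lam l 0 = 0 /\ Lam l 1 = 0 /\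
    exists d : R -> R, forall t,
      derivable_pt_lim (Lam l) t (d t) /\ derivable_pt_lim d t (Lam (l - 1)%nat t).

Inductive nth_deriv : nat -> (R -> R) -> (R -> R) -> Prop :=
| nth_deriv_0 : forall f, nth_deriv 0 f f
| nth_deriv_S : forall n f g h,
    nth_deriv n f g -> (forall x, derivable_pt_lim g x (h x)) ->
    nth_deriv (S n) f h.

Definition a_coef (xs : nat -> R) (N n : nat) : R :=
  (xs n - xs (n - 1)%nat) / (xs N - xs 0%nat).

(* y n k stands for the datum y_{n,2k}. *)
Definition q_fun (Lam : nat -> R -> R) (xs : nat -> R) (y : nat -> nat -> R)
  (N p n : nat) (alpha x : R) : R :=
  let L := xs N - xs 0%nat in
  let a := a_coef xs N n in
  sum_f_R0 (fun l =>
    ((a ^ (2 * l) * y (n - 1)%nat l - alpha * y 0%nat l) * Lam l ((xs N - x) / L)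
     + (a ^ (2 * l) * y n l - alpha * y N l) * Lam l ((x - xs 0%nat) / L))
    * L ^ (2 * l)) p.

Fixpoint rho_upto (y : nat -> nat -> R) (N k : nat) : R :=
  match k with
  | O => Rmax (Rabs (y 0%nat 0%nat)) (Rabs (y N 0%nat))
  | S k' => Rmax (rho_upto y N k') (Rmax (Rabs (y 0%nat k)) (Rabs (y N k)))
  end.

(* The 2k-th x-derivative of a Lidstone series sum_l (c_l Λ_l(u) + d_l Λ_l(v)) L^(2l), with
   u, v affine of slope ∓1/L, is the Lidstone series with coefficients shifted by k, since
   Λ_l'' = Λ_(l-1) and Λ_0'' = 0.  As q_n is affine in α, the mixed derivative is the
   Lidstone series with coefficients -y_(0,2(k+l)), -y_(N,2(k+l)), so everything reduces to
   |Λ_l| <= π^(1-2l)/3 on [0,1].  That follows from |Λ_(m+1)(t)| <= sin(πt)/(3π^(2m+1)),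
   by induction: with K = 1/(3π^(2m+3)), the functions K sin(πt) ± Λ_(m+2) vanish at 0 and 1
   and have second derivatives -Kπ² sin(πt) ± Λ_(m+1) <= 0, so they are nonnegative on [0,1]
   by concavity.  The induction starts from |Λ_1(t)| <= (t - t^3)/6 <= sin(πt)/(3π). *)

From Stdlib Require Import Reals Lra Lia Psatz FunctionalExtensionality.
From Coquelicot Require Import Coquelicot.
Open Scope R_scope.

Definition is_deriv2 (f f2 : R -> R) : Prop :=
  exists f1 : R -> R, forall x, derivable_pt_lim f x (f1 x) /\ derivable_pt_lim f1 x (f2 x).

Lemma is_deriv2_ext (f g f2 g2 : R -> R) :
  (forall x, f x = g x) -> (forall x, f2 x = g2 x) -> is_deriv2 f f2 -> is_deriv2 g g2.
Proof.
  intros Hf Hf2. apply functional_extensionality in Hf, Hf2. now subst.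
Qed.

Lemma is_deriv2_plus (f g f2 g2 : R -> R) :
  is_deriv2 f f2 -> is_deriv2 g g2 -> is_deriv2 (fun x => f x + g x) (fun x => f2 x + g2 x).
Proof.
  intros [f1 Hf] [g1 Hg]. exists (fun x => f1 x + g1 x). intros x.
  destruct (Hf x), (Hg x).
  split; [apply (derivable_pt_lim_plus f g)|apply (derivable_pt_lim_plus f1 g1)]; auto.
Qed.

Lemma is_deriv2_minus (f g f2 g2 : R -> R) :
  is_deriv2 f f2 -> is_deriv2 g g2 -> is_deriv2 (fun x => f x - g x) (fun x => f2 x - g2 x).
Proof.
  intros [f1 Hf] [g1 Hg]. exists (fun x => f1 x - g1 x). intros x.
  destruct (Hf x), (Hg x).
  split; [apply (derivable_pt_lim_minus f g)|apply (derivable_pt_lim_minus f1 g1)]; auto.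
Qed.

Lemma is_deriv2_scal (c : R) (f f2 : R -> R) :
  is_deriv2 f f2 -> is_deriv2 (fun x => c * f x) (fun x => c * f2 x).
Proof.
  intros [f1 Hf]. exists (fun x => c * f1 x). intros x.
  destruct (Hf x). split; [apply (derivable_pt_lim_scal f)|apply (derivable_pt_lim_scal f1)]; auto.
Qed.

Lemma is_deriv2_comp_affine (f f2 u : R -> R) (s : R) :
  (forall x, derivable_pt_lim u x s) -> is_deriv2 f f2 ->
  is_deriv2 (fun x => f (u x)) (fun x => s ^ 2 * f2 (u x)).
Proof.
  intros Hu [f1 Hf]. exists (fun x => s * f1 (u x)). intros x. split.
  - rewrite Rmult_comm. apply (derivable_pt_lim_comp u f); [apply Hu|apply Hf].
  - replace (s ^ 2 * f2 (u x)) with (s * (f2 (u x) * s)) by ring.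
    apply (derivable_pt_lim_scal (fun x => f1 (u x))).
    apply (derivable_pt_lim_comp u f1); [apply Hu|apply Hf].
Qed.

Lemma is_deriv2_sum (F F2 : nat -> R -> R) (m : nat) :
  (forall l, is_deriv2 (F l) (F2 l)) ->
  is_deriv2 (fun x => sum_f_R0 (fun l => F l x) m) (fun x => sum_f_R0 (fun l => F2 l x) m).
Proof.
  intros HF. induction m as [|m IH]; [apply HF|]. now apply is_deriv2_plus.
Qed.

Lemma is_deriv2_sin (w : R) : is_deriv2 (fun t => sin (w * t)) (fun t => - w ^ 2 * sin (w * t)).
Proof.
  exists (fun t => w * cos (w * t)). intros t.
  split; apply is_derive_Reals; auto_derive; auto; ring.
Qed.

Lemma concave_nonneg (w w2 : R -> R) (a b : R) :
  is_deriv2 w w2 -> (forall t, a <= t <= b -> w2 t <= 0) -> 0 <= w a -> 0 <= w b ->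
  forall t, a <= t <= b -> 0 <= w t.
Proof.
  intros [w1 Hw] Hw2 Ha Hb t Ht.
  destruct (Req_dec t a) as [->|Hta]; [lra|].
  destruct (Req_dec t b) as [->|Htb]; [lra|].
  destruct (MVT_cor2 w w1 a t) as [c1 [E1 Hc1]]; [lra|intros; apply Hw|].
  destruct (MVT_cor2 w w1 t b) as [c2 [E2 Hc2]]; [lra|intros; apply Hw|].
  destruct (MVT_cor2 w1 w2 c1 c2) as [c3 [E3 Hc3]]; [lra|intros; apply Hw|].
  assert (Hc3' : w2 c3 <= 0) by (apply Hw2; lra).
  assert (Hslope : w1 c2 <= w1 c1) by nra.
  (* [(b - a) w t] is the chord value plus [(t - a) (b - t) (w1 c1 - w1 c2)] *)
  assert (Hchord : (b - a) * w t =
                   (b - t) * w a + (t - a) * w b + (t - a) * (b - t) * (w1 c1 - w1 c2)) by nra.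
  assert (0 <= (t - a) * (b - t) * (w1 c1 - w1 c2)) by (apply Rmult_le_pos; nra).
  nra.
Qed.

Lemma abs_le_of_abs_deriv2_le (f f2 g g2 : R -> R) (a b : R) :
  is_deriv2 f f2 -> is_deriv2 g g2 ->
  (forall t, a <= t <= b -> Rabs (f2 t) <= - g2 t) ->
  Rabs (f a) <= g a -> Rabs (f b) <= g b ->
  forall t, a <= t <= b -> Rabs (f t) <= g t.
Proof.
  intros Hf Hg H2 Ha Hb t Ht.
  assert (Habs : forall x c, Rabs x <= c -> 0 <= c - x /\ 0 <= c + x).
  { intros x c Hx. pose proof (Rle_abs x). pose proof (Rle_abs (- x)).
    rewrite Rabs_Ropp in *. lra. }
  destruct (Habs _ _ Ha), (Habs _ _ Hb).
  pose proof (concave_nonneg _ _ a b (is_deriv2_minus _ _ _ _ Hg Hf)) as Hminus.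
  pose proof (concave_nonneg _ _ a b (is_deriv2_plus _ _ _ _ Hg Hf)) as Hplus.
  apply Rabs_le. split.
  - enough (0 <= g t + f t) by lra.
    apply Hplus; auto. intros s Hs. destruct (Habs _ _ (H2 s Hs)). lra.
  - enough (0 <= g t - f t) by lra.
    apply Hminus; auto. intros s Hs. destruct (Habs _ _ (H2 s Hs)). lra.
Qed.

Lemma Lidstone_deriv2_0 (Lam : nat -> R -> R) : Lidstone Lam -> is_deriv2 (Lam 0%nat) (fun _ => 0).
Proof.
  intros [H0 _].
  replace (Lam 0%nat) with (fun t : R => t) by (apply functional_extensionality; auto).
  exists (fun _ => 1). intros t. split; [apply derivable_pt_lim_id|apply derivable_pt_lim_const].
Qed.

Lemma Lidstone_deriv2 (Lam : nat -> R -> R) (l : nat) :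
  Lidstone Lam -> is_deriv2 (Lam (S l)) (Lam l).
Proof.
  intros [_ HL]. destruct (HL (S l) ltac:(lia)) as [_ [_ [d Hd]]].
  replace (S l - 1)%nat with l in Hd by lia. now exists d.
Qed.

Lemma Lidstone_boundary (Lam : nat -> R -> R) (l : nat) :
  Lidstone Lam -> Lam (S l) 0 = 0 /\ Lam (S l) 1 = 0.
Proof.
  intros [_ HL]. destruct (HL (S l) ltac:(lia)) as [H0 [H1 _]]. auto.
Qed.

Lemma Lidstone_1_le_cubic (Lam : nat -> R -> R) (t : R) :
  Lidstone Lam -> 0 <= t <= 1 -> Rabs (Lam 1%nat t) <= (t - t ^ 3) / 6.
Proof.
  intros HL Ht. destruct (Lidstone_boundary Lam 0 HL) as [L0 L1].
  apply (abs_le_of_abs_deriv2_le _ (Lam 0%nat) (fun t => (t - t ^ 3) / 6) (fun t => - t) 0 1); auto.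
  - now apply Lidstone_deriv2.
  - exists (fun t => (1 - 3 * t ^ 2) / 6). intros s.
    split; apply is_derive_Reals; auto_derive; auto; field.
  - intros s Hs. destruct HL as [H0 _]. rewrite H0, Rabs_right; lra.
  - rewrite L0, Rabs_R0. lra.
  - rewrite L1, Rabs_R0. lra.
Qed.

Lemma PI_le_52_15 : PI <= 52 / 15.
Proof.
  destruct (PI_ineq 1) as [_ H]. simpl in H. unfold tg_alt, PI_tg in H. simpl in H. lra.
Qed.

Lemma sin_ge_cubic (a : R) : 0 <= a <= PI -> a - a ^ 3 / 6 <= sin a.
Proof.
  intros Ha. destruct (SIN a) as [H _]; try lra.
  unfold sin_lb, sin_approx, sin_term in H. simpl in H.
  pose proof PI_4.
  assert (0 <= a ^ 5 * (42 - a * a) / 5040).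
  { apply Rmult_le_pos; [apply Rmult_le_pos|lra]; [apply pow_le|]; nra. }
  lra.
Qed.

Lemma cubic_le_sin (t : R) : 0 <= t <= 1 -> (t - t ^ 3) / 6 <= / (3 * PI) * sin (PI * t).
Proof.
  intros Ht. pose proof PI_le_52_15. assert (3 <= PI) by (pose proof PI2_3_2; lra).
  assert (PI * PI <= 13) by nra.
  enough (PI * (t - t ^ 3) <= 2 * sin (PI * t)).
  { apply (Rmult_le_reg_l (6 * PI)); [lra|].
    replace (6 * PI * (/ (3 * PI) * sin (PI * t))) with (2 * sin (PI * t)) by (field; lra). lra. }
  (* expand the sine at 0 for small [t] and at [PI] for [t] close to 1 *)
  destruct (Rle_lt_dec t (9 / 20)).
  - assert (PI * t - (PI * t) ^ 3 / 6 <= sin (PI * t)) by (apply sin_ge_cubic; nra).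
    assert (0 <= PI * t * (1 - t * t * (PI * PI / 3 - 1))) by (apply Rmult_le_pos; nra).
    nra.
  - set (u := 1 - t).
    assert (E : sin (PI * t) = sin (PI * u)) by (unfold u; rewrite <- sin_PI_x; f_equal; ring).
    rewrite E. replace t with (1 - u) by (unfold u; ring).
    assert (PI * u - (PI * u) ^ 3 / 6 <= sin (PI * u)) by (apply sin_ge_cubic; unfold u; nra).
    assert (0 <= PI * u * u * (3 - u * (1 + PI * PI / 3))).
    { apply Rmult_le_pos; [unfold u; apply Rmult_le_pos; nra|unfold u; nra]. }
    nra.
Qed.

Lemma Lidstone_le_sin (Lam : nat -> R -> R) (m : nat) (t : R) :
  Lidstone Lam -> 0 <= t <= 1 -> Rabs (Lam (S m) t) <= / (3 * PI ^ (2 * m + 1)) * sin (PI * t).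
Proof.
  intros HL. pose proof PI_RGT_0. revert t. induction m as [|m IH]; intros t Ht.
  - replace (PI ^ (2 * 0 + 1)) with PI by (simpl; ring).
    eapply Rle_trans; [apply Lidstone_1_le_cubic|apply cubic_le_sin]; auto.
  - destruct (Lidstone_boundary Lam (S m) HL) as [L0 L1].
    set (K := / (3 * PI ^ (2 * S m + 1))).
    assert (HK : K * PI ^ 2 = / (3 * PI ^ (2 * m + 1))).
    { unfold K. replace (2 * S m + 1)%nat with (2 * m + 1 + 2)%nat by lia. rewrite pow_add.
      field. split; [apply pow_nonzero|]; lra. }
    apply (abs_le_of_abs_deriv2_le _ (Lam (S m)) (fun t => K * sin (PI * t))
             (fun t => K * (- PI ^ 2 * sin (PI * t))) 0 1); auto.
    + now apply Lidstone_deriv2.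
    + apply is_deriv2_scal, is_deriv2_sin.
    + intros s Hs. replace (- _) with (/ (3 * PI ^ (2 * m + 1)) * sin (PI * s))
        by (rewrite <- HK; ring).
      now apply IH.
    + rewrite L0, Rmult_0_r, sin_0, Rabs_R0. lra.
    + rewrite L1, Rmult_1_r, sin_PI, Rabs_R0. lra.
Qed.

Lemma Lidstone_bound (Lam : nat -> R -> R) (l : nat) (t : R) :
  Lidstone Lam -> 0 <= t <= 1 -> Rabs (Lam l t) <= PI / (3 * PI ^ (2 * l)).
Proof.
  intros HL Ht. pose proof PI_RGT_0. assert (3 <= PI) by (pose proof PI2_3_2; lra).
  destruct l as [|m].
  - destruct HL as [Hid _]. rewrite Hid, Rabs_right by lra. simpl.
    apply (Rmult_le_reg_l 3); [lra|]. field_simplify; lra.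
  - eapply Rle_trans; [now apply Lidstone_le_sin|].
    replace (PI / (3 * PI ^ (2 * S m))) with (/ (3 * PI ^ (2 * m + 1)) * 1).
    + apply Rmult_le_compat_l; [|apply SIN_bound].
      left. apply Rinv_0_lt_compat. apply Rmult_lt_0_compat; [lra|apply pow_lt; lra].
    + replace (2 * S m)%nat with (S (2 * m + 1)) by lia. simpl. field.
      split; [apply pow_nonzero|]; lra.
Qed.

Lemma nth_deriv_SS (n : nat) (f g h : R -> R) :
  nth_deriv n f g -> is_deriv2 g h -> nth_deriv (S (S n)) f h.
Proof.
  intros Hn [g1 Hg]. apply nth_deriv_S with g1; [apply nth_deriv_S with g|]; auto; apply Hg.
Qed.

Definition lidstone_series (Lam : nat -> R -> R) (x0 x1 : R) (c d : nat -> R) (m : nat)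
    (x : R) : R :=
  sum_f_R0 (fun l => (c l * Lam l ((x1 - x) / (x1 - x0)) + d l * Lam l ((x - x0) / (x1 - x0)))
                     * (x1 - x0) ^ (2 * l)) m.

Lemma is_deriv2_lidstone_term (F F2 : R -> R) (c d K x0 x1 : R) :
  x0 <> x1 -> is_deriv2 F F2 ->
  is_deriv2 (fun x => (c * F ((x1 - x) / (x1 - x0)) + d * F ((x - x0) / (x1 - x0))) * K)
    (fun x => (c * F2 ((x1 - x) / (x1 - x0)) + d * F2 ((x - x0) / (x1 - x0)))
              * (K / (x1 - x0) ^ 2)).
Proof.
  intros Hne HF.
  assert (Hu : forall x, derivable_pt_lim (fun x => (x1 - x) / (x1 - x0)) x (- / (x1 - x0))).
  { intros x. apply is_derive_Reals. auto_derive; auto. field. lra. }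
  assert (Hv : forall x, derivable_pt_lim (fun x => (x - x0) / (x1 - x0)) x (/ (x1 - x0))).
  { intros x. apply is_derive_Reals. auto_derive; auto. field. lra. }
  pose proof (is_deriv2_scal K _ _ (is_deriv2_plus _ _ _ _
    (is_deriv2_scal c _ _ (is_deriv2_comp_affine _ _ _ _ Hu HF))
    (is_deriv2_scal d _ _ (is_deriv2_comp_affine _ _ _ _ Hv HF)))) as Hterm.
  refine (is_deriv2_ext _ _ _ _ _ _ Hterm); intros x; simpl.
  - ring.
  - field. lra.
Qed.

Lemma lidstone_series_deriv2 (Lam : nat -> R -> R) (x0 x1 : R) (c d : nat -> R) (m : nat) :
  Lidstone Lam -> x0 <> x1 ->
  is_deriv2 (lidstone_series Lam x0 x1 c d (S m))
            (lidstone_series Lam x0 x1 (fun l => c (S l)) (fun l => d (S l)) m).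
Proof.
  intros HL Hne. unfold lidstone_series.
  eapply is_deriv2_ext;
    [intros x; symmetry; apply (decomp_sum _ (S m)); lia|intros x; apply Rplus_0_l|].
  apply is_deriv2_plus.
  - eapply is_deriv2_ext; [reflexivity| |apply is_deriv2_lidstone_term, Lidstone_deriv2_0; auto].
    intros x. simpl. ring.
  - apply is_deriv2_sum. intros l.
    eapply is_deriv2_ext; [reflexivity| |apply is_deriv2_lidstone_term, Lidstone_deriv2; auto].
    intros x. f_equal. replace (2 * S l)%nat with (2 * l + 2)%nat by lia.
    rewrite pow_add. field. lra.
Qed.

Lemma nth_deriv_lidstone_series (Lam : nat -> R -> R) (x0 x1 : R) (c d : nat -> R) (p k : nat) :
  Lidstone Lam -> x0 <> x1 -> (k <= p)%nat ->
  nth_deriv (2 * k) (lidstone_series Lam x0 x1 c d p)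
    (lidstone_series Lam x0 x1 (fun l => c (k + l)%nat) (fun l => d (k + l)%nat) (p - k)).
Proof.
  intros HL Hne. induction k as [|k IH]; intros Hk.
  - rewrite Nat.sub_0_r. constructor.
  - replace (2 * S k)%nat with (S (S (2 * k))) by lia.
    apply nth_deriv_SS with (1 := IH ltac:(lia)).
    replace (p - k)%nat with (S (p - S k)) by lia.
    assert (Hshift : forall e : nat -> R, (fun l => e (S k + l)%nat) = (fun l => e (k + S l)%nat)).
    { intros e. apply functional_extensionality. intros l. f_equal. lia. }
    rewrite !Hshift. now apply lidstone_series_deriv2.
Qed.

Lemma derivable_pt_lim_lidstone_series_coef (Lam : nat -> R -> R) (x0 x1 : R)
    (c c' d d' : nat -> R) (m : nat) (alpha x : R) :
  derivable_pt_lim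
    (fun b => lidstone_series Lam x0 x1 (fun l => c l - b * c' l) (fun l => d l - b * d' l) m x)
    alpha (- lidstone_series Lam x0 x1 c' d' m x).
Proof.
  replace (fun b => _) with
    (fun b => lidstone_series Lam x0 x1 c d m x - b * lidstone_series Lam x0 x1 c' d' m x).
  - apply is_derive_Reals. auto_derive; auto. ring.
  - apply functional_extensionality. intros b. unfold lidstone_series.
    induction m as [|m IH]; [simpl; ring|]. rewrite !tech5, <- IH. ring.
Qed.

Lemma lidstone_series_abs_le (Lam : nat -> R -> R) (x0 x1 : R) (c d : nat -> R) (r : R)
    (m : nat) (x : R) :
  Lidstone Lam -> x0 < x1 -> x0 <= x <= x1 ->
  (forall l, (l <= m)%nat -> Rabs (c l) <= r /\ Rabs (d l) <= r) ->
  Rabs (lidstone_series Lam x0 x1 c d m x) <=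
  2 * r * PI / 3 * sum_f_R0 (fun l => ((x1 - x0) / PI) ^ (2 * l)) m.
Proof.
  intros HL Hlt Hx Hcd. pose proof PI_RGT_0.
  assert (Hunit : forall s, 0 <= s <= x1 - x0 -> 0 <= s / (x1 - x0) <= 1).
  { intros s Hs. unfold Rdiv. split.
    - apply Rmult_le_pos; [lra|]. left. apply Rinv_0_lt_compat. lra.
    - apply (Rmult_le_reg_r (x1 - x0)); [lra|]. rewrite Rmult_assoc, Rinv_l; lra. }
  eapply Rle_trans; [apply sum_f_R0_triangle|].
  rewrite scal_sum. apply sum_Rle. intros l Hl.
  destruct (Hcd l Hl) as [Hc Hd].
  pose proof (Lidstone_bound Lam l _ HL (Hunit (x1 - x) ltac:(split; lra))) as Bu.
  pose proof (Lidstone_bound Lam l _ HL (Hunit (x - x0) ltac:(split; lra))) as Bv.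
  pose proof (pow_le (x1 - x0) (2 * l) ltac:(lra)) as HLl.
  rewrite Rabs_mult, (Rabs_right ((x1 - x0) ^ (2 * l))) by lra.
  replace (((x1 - x0) / PI) ^ (2 * l) * (2 * r * PI / 3)) with
    ((r * (PI / (3 * PI ^ (2 * l))) + r * (PI / (3 * PI ^ (2 * l)))) * (x1 - x0) ^ (2 * l)).
  2: { unfold Rdiv. rewrite Rpow_mult_distr, pow_inv. field. apply pow_nonzero. lra. }
  apply Rmult_le_compat_r; [lra|].
  eapply Rle_trans; [apply Rabs_triang|]. rewrite !Rabs_mult.
  apply Rplus_le_compat; apply Rmult_le_compat; auto using Rabs_pos.
Qed.

Lemma rho_upto_ge (y : nat -> nat -> R) (N p l : nat) :
  (l <= p)%nat -> Rabs (y 0%nat l) <= rho_upto y N p /\ Rabs (y N l) <= rho_upto y N p.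
Proof.
  induction p as [|p IH]; intros Hl; simpl.
  - replace l with 0%nat by lia. split; [apply Rmax_l|apply Rmax_r].
  - pose proof (Rmax_l (rho_upto y N p) (Rmax (Rabs (y 0%nat (S p))) (Rabs (y N (S p))))).
    pose proof (Rmax_r (rho_upto y N p) (Rmax (Rabs (y 0%nat (S p))) (Rabs (y N (S p))))).
    destruct (Nat.eq_dec l (S p)) as [->|Hne].
    + pose proof (Rmax_l (Rabs (y 0%nat (S p))) (Rabs (y N (S p)))).
      pose proof (Rmax_r (Rabs (y 0%nat (S p))) (Rabs (y N (S p)))).
      split; lra.
    + destruct (IH ltac:(lia)). split; lra.
Qed.

Lemma increasing_lt (xs : nat -> R) (N i j : nat) :
  (forall i, (i < N)%nat -> xs i < xs (S i)) -> (i < j <= N)%nat -> xs i < xs j.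
Proof.
  intros Hinc [Hij HjN]. induction Hij as [|j Hij IH]; [apply Hinc; lia|].
  specialize (IH ltac:(lia)). pose proof (Hinc j ltac:(lia)). lra.
Qed.

Theorem proposition4p1 (p N : nat) (xs : nat -> R) (y : nat -> nat -> R)
  (Lam : nat -> R -> R) (n : nat) :
  Lidstone Lam ->
  (forall i : nat, (i < N)%nat -> xs i < xs (S i)) ->
  (1 <= n <= N)%nat ->
  forall k : nat, (k <= p)%nat ->
  exists G D : R -> R -> R,
    (forall alpha, nth_deriv (2 * k) (fun x => q_fun Lam xs y N p n alpha x) (G alpha)) /\
    (forall alpha x, derivable_pt_lim (fun b => G b x) alpha (D alpha x)) /\
    (forall alpha x, xs 0%nat <= x <= xs N ->
       Rabs (D alpha x) <=
       2 * rho_upto y N p * PI / 3 *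
       sum_f_R0 (fun l => ((xs N - xs 0%nat) / PI) ^ (2 * l)) (p - k)).
Proof.
  intros HL Hinc Hn k Hk.
  assert (Hlt : xs 0%nat < xs N) by (apply (increasing_lt xs N); auto; lia).
  set (c := fun l => a_coef xs N n ^ (2 * l) * y (n - 1)%nat l).
  set (d := fun l => a_coef xs N n ^ (2 * l) * y n l).
  exists (fun alpha => lidstone_series Lam (xs 0%nat) (xs N)
            (fun l => c (k + l)%nat - alpha * y 0%nat (k + l)%nat)
            (fun l => d (k + l)%nat - alpha * y N (k + l)%nat) (p - k)).
  exists (fun _ x => - lidstone_series Lam (xs 0%nat) (xs N)
            (fun l => y 0%nat (k + l)%nat) (fun l => y N (k + l)%nat) (p - k) x).
  split; [|split].
  - (* [q_fun Lam xs y N p n alpha] unfolds to a [lidstone_series] on [[xs 0, xs N]] *)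
    intros alpha.
    exact (nth_deriv_lidstone_series Lam _ _ (fun l => c l - alpha * y 0%nat l)
             (fun l => d l - alpha * y N l) p k HL (Rlt_not_eq _ _ Hlt) Hk).
  - intros alpha x. apply derivable_pt_lim_lidstone_series_coef.
  - intros alpha x Hx. rewrite Rabs_Ropp.
    apply lidstone_series_abs_le; auto.
    intros l Hl. apply rho_upto_ge. lia.
Qed.
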